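(* Let $Y$ be a real Banach space. The norm of $Y$ is Gâteaux differentiable (at every nonzero point) if and only if every closed linear subspace $X$ of $Y$ has property wU in $Y$.
   Context: A closed subspace $X$ of a Banach space $Y$ has property wU in $Y$ if every norm-attaining functional $x^*\in X^*$ (i.e. $x^*(x)=\|x^*\|$ for some $x$ in the unit sphere of $X$) has a unique Hahn–Banach extension to $Y$, i.e. there is exactly one $y^*\in Y^*$ with $y^*|_X=x^*$ and $\|y^*\|=\|x^*\|$. *)

From HB Require Import structures.
From mathcomp Require Import all_boot all_order all_algebra.
From mathcomp Require Import all_classical all_reals all_analysis.
Set Implicit Arguments. Unset Strict Implicit. Unset Printing Implicit Defensive.
Import Order.TTheory GRing.Theory Num.Theory.
Import numFieldNormedType.Exports.
Local Open Scope classical_set_scope.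
Local Open Scope ring_scope.

Section Defs.
Variables (R : realType) (Y : normedModType R).

Definition linear_on (X : set Y) (f : Y -> R) : Prop :=
  forall (a : R) (x y : Y), X x -> X y -> f (a *: x + y) = a * f x + f y.

Definition lin_subspace (X : set Y) : Prop :=
  X 0 /\ (forall (a : R) (x y : Y), X x -> X y -> X (a *: x + y)).

(** An element of the dual X^* of the subspace X: a continuous linear
    functional on X (represented by a function on Y whose values outside
    X are irrelevant). *)
Definition dual_elt (X : set Y) (f : Y -> R) : Prop :=
  linear_on X f /\ {within X, continuous f}.

Definition dual_norm (X : set Y) (f : Y -> R) : R :=
  sup [set `|f x| | x in [set x | X x /\ `|x| <= 1]].

Definition norm_attaining (X : set Y) (f : Y -> R) : Prop :=
  exists x, X x /\ `|x| = 1 /\ f x = dual_norm X f.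

Definition HB_extension (X : set Y) (f g : Y -> R) : Prop :=
  dual_elt setT g /\ (forall x, X x -> g x = f x) /\
  dual_norm setT g = dual_norm X f.

Definition unique_HB_extension (X : set Y) (f : Y -> R) : Prop :=
  exists g, HB_extension X f g /\
    forall g', HB_extension X f g' -> g' = g.

Definition property_wU (X : set Y) : Prop :=
  forall f, dual_elt X f -> norm_attaining X f -> unique_HB_extension X f.

Definition norm_gateaux_at (x : Y) : Prop :=
  exists g : Y -> R, dual_elt setT g /\
    forall h : Y, derivable (fun y : Y => (`|y| : R^o)) x h /\
                  'D_h (fun y : Y => (`|y| : R^o)) x = g h.

Definition norm_gateaux : Prop := forall x : Y, x != 0 -> norm_gateaux_at x.

End Defs.

From HB Require Import structures.
From mathcomp Require Import all_boot all_order all_algebra.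
From mathcomp Require Import all_classical all_reals all_analysis.
From mathcomp Require Import ring lra.
Set Implicit Arguments. Unset Strict Implicit. Unset Printing Implicit Defensive.
Import Order.TTheory GRing.Theory Num.Theory.
Import numFieldNormedType.Exports.
Local Open Scope classical_set_scope.
Local Open Scope ring_scope.

(** Forward direction: if [x*] attains its norm at a unit vector [x0], any Hahn-Banach
    extension divided by [|x*|] is a norm-one functional equal to [1] at [x0]; such a
    functional lies between the right and left difference quotients of the norm at [x0],
    so it is the Gateaux derivative there, which makes the extension unique.

    Converse: for [x <> 0], property wU on the line through [x] provides a unique norm-one
    functional [g] with [g x = |x|].  For a direction [h], the quotients
    [(|x + t h| - |x|) / t] decrease, as [t] decreases to [0], to a limit [L >= g h], and
    [t |-> |x| + t L] is a minorant of [t |-> |x + t h|].  Hence, unless [h] is a multiple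
    of [x], [a x + b h |-> a |x| + b L] has norm one on the plane spanned by [x] and [h]
    and attains it at [x]; by wU on that closed plane it has a norm-one extension, which
    is then [g], so [L = g h].  Applied to [-h] this also identifies the left limit. *)

Section Subspaces.
Variables (R : realType) (Y : normedModType R).

Section LinearOn.
Variables (X : set Y) (f : Y -> R).
Hypotheses (sX : lin_subspace X) (lf : linear_on X f).

Lemma lin_subspace0 : X 0. Proof. by case: sX. Qed.

Lemma lin_subspaceZD a x y : X x -> X y -> X (a *: x + y).
Proof. by case: sX => _; apply. Qed.

Lemma lin_subspaceZ a x : X x -> X (a *: x).
Proof. by move=> Xx; rewrite -[_ *: _]addr0; apply: lin_subspaceZD => //; apply: lin_subspace0. Qed.

Lemma lin_subspaceN x : X x -> X (- x).
Proof. by rewrite -scaleN1r; apply: lin_subspaceZ. Qed.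

Lemma lin_subspaceB x y : X x -> X y -> X (x - y).
Proof. by move=> Xx Xy; rewrite -[x]scale1r; apply: lin_subspaceZD => //; apply: lin_subspaceN. Qed.

Lemma linear_on0 : f 0 = 0.
Proof. by have := lf 1 lin_subspace0 lin_subspace0; rewrite scale1r addr0 => ?; lra. Qed.

Lemma linear_onZ a x : X x -> f (a *: x) = a * f x.
Proof. by move=> Xx; have := lf a Xx lin_subspace0; rewrite !addr0 linear_on0 addr0. Qed.

Lemma linear_onN x : X x -> f (- x) = - f x.
Proof. by move=> Xx; rewrite -scaleN1r linear_onZ // mulN1r. Qed.

Lemma linear_onB x y : X x -> X y -> f (x - y) = f x - f y.
Proof.
by move=> Xx Xy; have := lf 1 Xx (lin_subspaceN Xy); rewrite scale1r mul1r linear_onN.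
Qed.

End LinearOn.

Lemma lin_subspaceT : lin_subspace (@setT Y). Proof. by split. Qed.

End Subspaces.
Arguments lin_subspaceT {R Y}.

Section DualNorm.
Variables (R : realType) (Y : normedModType R).
Implicit Types (X : set Y) (f : Y -> R).

Lemma dual_elt_bounded X f : lin_subspace X -> dual_elt X f ->
  exists2 M : R, 0 < M & forall y, X y -> `|f y| <= M * `|y|.
Proof.
move=> sX [lf /subspace_continuousP /(_ 0 (lin_subspace0 sX))].
rewrite /from_subspace (linear_on0 sX lf) => /cvgrPdist_lt /(_ 1 ltr01) /nbhs_normP[e e0 near0].
have small y : X y -> `|y| < e -> `|f y| < 1.
  by move=> Xy ye; have /= := near0 y; rewrite !sub0r !normrN; apply.
exists (2 / e) => [|y Xy]; first by rewrite divr_gt0.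
have [->|y0] := eqVneq y 0; first by rewrite (linear_on0 sX lf) !normr0 mulr0.
have ny : 0 < `|y| by rewrite normr_gt0.
set c := e / (2 * `|y|).
have c0 : 0 < c by rewrite divr_gt0 // mulr_gt0.
have := small (c *: y) (lin_subspaceZ sX _ Xy).
rewrite (linear_onZ sX lf) // normrM normrZ gtr0_norm //.
have -> : c * `|y| = e / 2 by rewrite /c; field; rewrite gt_eqF.
have e2 : e / 2 < e by move: e0 => /= e0; lra.
by move=> /(_ e2) /ltW; rewrite -ler_pdivlMl // /c invf_div mulr1 mulrAC.
Qed.

Lemma bounded_dual_elt X f (M : R) : lin_subspace X -> linear_on X f ->
  (forall y, X y -> `|f y| <= M * `|y|) -> dual_elt X f.
Proof.
move=> sX lf fM; split => //; apply/subspace_continuousP => z Xz.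
apply/cvgrPdist_lt => e e0; apply/nbhs_normP.
have M1 : 0 < `|M| + 1 by rewrite ltr_pwDr.
exists (e / (`|M| + 1)) => [|w /= zw Xw]; first by rewrite /= divr_gt0.
rewrite -(linear_onB sX lf) //; apply: le_lt_trans (fM _ (lin_subspaceB sX Xz Xw)) _.
rewrite ltr_pdivlMr // in zw; apply: le_lt_trans zw.
by rewrite mulrC ler_wpM2l // (le_trans (ler_norm M)) // lerDl.
Qed.

Lemma dual_eltZ X f (a : R) : lin_subspace X -> dual_elt X f ->
  dual_elt X (fun y => a * f y).
Proof.
move=> sX df; have [M _ fM] := dual_elt_bounded sX df.
apply: (bounded_dual_elt (M := `|a| * M)) => // [b u v Xu Xv|y Xy].
  by rewrite df.1 //; ring.
by rewrite normrM -mulrA ler_wpM2l ?fM.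
Qed.

Lemma dual_norm_le X f (c : R) : lin_subspace X ->
  (forall y, X y -> `|y| <= 1 -> `|f y| <= c) -> dual_norm X f <= c.
Proof.
move=> sX fc; apply: ge_sup; last by move=> _ [y [Xy y1] <-]; apply: fc.
by exists `|f 0|, 0 => //=; rewrite normr0 ler01; split => //; apply: lin_subspace0.
Qed.

Section DualElt.
Variables (X : set Y) (f : Y -> R).
Hypotheses (sX : lin_subspace X) (df : dual_elt X f).

Lemma dual_norm_ge y : X y -> `|y| <= 1 -> `|f y| <= dual_norm X f.
Proof.
move=> Xy y1; have [M M0 fM] := dual_elt_bounded sX df.
apply: ub_le_sup; last by exists y.
exists M => _ [z [Xz z1] <-]; apply: le_trans (fM _ Xz) _.
by rewrite ler_piMr // ltW.
Qed.

Lemma dual_norm_ge0 : 0 <= dual_norm X f.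
Proof.
apply: le_trans (dual_norm_ge (lin_subspace0 sX) _); rewrite ?normr0 //.
Qed.

Lemma dual_norm_bound y : X y -> `|f y| <= dual_norm X f * `|y|.
Proof.
move=> Xy; have [->|y0] := eqVneq y 0.
  by rewrite (linear_on0 sX df.1) !normr0 mulr0.
have ny : 0 < `|y| by rewrite normr_gt0.
have := dual_norm_ge (lin_subspaceZ sX `|y|^-1 Xy).
have iy : 0 <= `|y|^-1 by rewrite invr_ge0 normr_ge0.
rewrite (linear_onZ sX df.1) // normrM normrZ ger0_norm // mulVf ?gt_eqF //.
by move=> /(_ (lexx _)); rewrite ler_pdivrMl // mulrC.
Qed.

End DualElt.

Lemma support_functional_norm_attaining X f x : lin_subspace X -> linear_on X f ->
  (forall y, X y -> f y <= `|y|) -> X x -> x != 0 -> f x = `|x| ->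
  [/\ dual_elt X f, dual_norm X f = 1 & norm_attaining X f].
Proof.
move=> sX lf fle Xx x0 fx.
have fb y : X y -> `|f y| <= `|y|.
  move=> Xy; rewrite ler_norml fle // andbT lerNl -(linear_onN sX lf) //.
  by rewrite -normrN fle //; apply: lin_subspaceN.
have df : dual_elt X f by apply: (bounded_dual_elt (M := 1)) => // y; rewrite mul1r; apply: fb.
have nx : 0 < `|x| by rewrite normr_gt0.
set u := `|x|^-1 *: x.
have Xu : X u by apply: lin_subspaceZ.
have nu : `|u| = 1 by rewrite normrZ ger0_norm ?invr_ge0 ?ltW // mulVf ?gt_eqF.
have fu : f u = 1 by rewrite (linear_onZ sX lf) // fx mulVf ?gt_eqF.
have n1 : dual_norm X f = 1.
  apply/eqP; rewrite eq_le (dual_norm_le sX) => [|y Xy]; last exact/le_trans/fb.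
  by have := dual_norm_ge sX df Xu; rewrite nu fu normr1 => ->.
by split => //; exists u; rewrite fu n1.
Qed.

End DualNorm.

Section OneSidedLimits.
Variables (R : realType) (g : R -> R) (a L M : R).
Hypothesis gL : g @ a^' --> L.

Let gL_right : g @ a^'+ --> L.
Proof. by apply: cvg_trans gL; apply: cvg_fmap2; apply: within_subset => t /gt_eqF/negbT. Qed.

Let gL_left : g @ a^'- --> L.
Proof. by apply: cvg_trans gL; apply: cvg_fmap2; apply: within_subset => t /lt_eqF/negbT. Qed.

Lemma cvg_dnbhs_to_ge_right : (forall t, a < t -> M <= g t) -> M <= L.
Proof. by move=> gM; apply: cvgr_to_ge gL_right _; apply: filterS gM (nbhs_right_gt a). Qed.

Lemma cvg_dnbhs_to_le_right : (forall t, a < t -> g t <= M) -> L <= M.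
Proof. by move=> gM; apply: cvgr_to_le gL_right _; apply: filterS gM (nbhs_right_gt a). Qed.

Lemma cvg_dnbhs_to_le_left : (forall t, t < a -> g t <= M) -> L <= M.
Proof. by move=> gM; apply: cvgr_to_le gL_left _; apply: filterS gM (nbhs_left_lt a). Qed.

End OneSidedLimits.

Section Lines.
Variables (R : realType) (Y : normedModType R).

Definition line (u : Y) : set Y := [set y | exists t, y = t *: u].

(** A junk value when [y] is not on [line u]. *)
Definition line_coord (u y : Y) : R := xget 0 [set t | y = t *: u].

Lemma line_coordZ u t : u != 0 -> line_coord u (t *: u) = t.
Proof.
move=> u0; apply: xget_unique => // s /eqP; rewrite -subr_eq0 -scalerBl.
by rewrite scaler_eq0 (negbTE u0) orbF subr_eq0 => /eqP.
Qed.

Lemma line_subspace u : lin_subspace (line u).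
Proof.
split; first by exists 0; rewrite scale0r.
by move=> a _ _ [s ->] [t ->]; exists (a * s + t); rewrite scalerDl scalerA.
Qed.

(** A point of the closure of [line u] is a limit of points [t *: u] with [t] bounded, so it
    lies in the compact image of a segment. *)
Lemma closed_line u : u != 0 -> closed (line u).
Proof.
move=> u0 y cly; have nu : 0 < `|u| by rewrite normr_gt0.
set M := (`|y| + 1) / `|u|.
have cK : closed ((fun t : R => t *: u) @` `[-M, M]).
  apply: compact_closed; first exact: norm_hausdorff.
  apply: continuous_compact; last exact: segment_compact.
  by apply: continuous_subspaceT; exact: scalel_continuous.
suff [t _ <-] : ((fun t : R => t *: u) @` `[-M, M]) y by exists t.
apply: cK => B By; have B1 : nbhs y (B `&` [set z | `|y - z| < 1]).
  by apply: filterI => //; apply/nbhs_normP; exists 1 => //=.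
have [_ [[t ->] [Bz yz]]] := cly _ B1.
exists (t *: u); split => //; exists t => //.
rewrite /= in_itv /= -ler_norml /M ler_pdivlMr //.
move: yz => /=; have := ler_normD (t *: u - y) y.
by rewrite subrK distrC normrZ; lra.
Qed.

End Lines.

Section NormQuotient.
Variables (R : realType) (Y : normedModType R).

Definition norm_quot (x h : Y) (t : R) : R := t^-1 * (`|t *: h + x| - `|x|).

Lemma norm_gateaux_atP (x : Y) : norm_gateaux_at x <->
  exists2 g, dual_elt setT g & forall h, norm_quot x h @ 0^' --> g h.
Proof.
split=> [[g [dg gD]]|[g dg gq]].
  by exists g => // h; have [dh <-] := gD h; apply: dh.
exists g; split => // h; split; first by apply/cvgP; exact: gq.
by apply: cvg_lim => //; exact: gq.
Qed.

Lemma mulr_norm_quot x h t : t != 0 -> t * norm_quot x h t = `|t *: h + x| - `|x|.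
Proof. by move=> t0; rewrite /norm_quot mulrA mulfV // mul1r. Qed.

Lemma norm_quotN x h t : norm_quot x h (- t) = - norm_quot x (- h) t.
Proof. by rewrite /norm_quot invrN scaleNr scalerN mulNr. Qed.

Lemma norm_quot_ge x h t : 0 < t -> - `|h| <= norm_quot x h t.
Proof.
move=> t0; rewrite -(ler_pM2l t0) mulr_norm_quot ?gt_eqF //.
by have := lerB_normD x (t *: h); rewrite [x + _]addrC normrZ gtr0_norm //; lra.
Qed.

Lemma norm_quot_le x h t : 0 < t -> norm_quot x h t <= `|h|.
Proof.
move=> t0; rewrite -(ler_pM2l t0) mulr_norm_quot ?gt_eqF //.
by have := ler_normD (t *: h) x; rewrite normrZ gtr0_norm //; lra.
Qed.

(** Convexity of the norm: [s *: h + x] is a convex combination of [t *: h + x] and [x]. *)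
Lemma norm_quot_nondecreasing x h :
  {in `]0, +oo[ &, nondecreasing_fun (norm_quot x h)}.
Proof.
move=> s t; rewrite !in_itv /= !andbT => s0 t0 st.
set r := s / t.
have r0 : 0 <= r by rewrite divr_ge0 // ltW.
have r1 : r <= 1 by rewrite ler_pdivrMr // mul1r.
have E : s *: h + x = r *: (t *: h + x) + (1 - r) *: x.
  rewrite scalerDr scalerA /r mulfVK ?gt_eqF // scalerBl scale1r.
  by rewrite -addrA [_ *: x + _]addrC subrK.
have N : `|s *: h + x| <= r * `|t *: h + x| + (1 - r) * `|x|.
  rewrite E; apply: le_trans (ler_normD _ _) _.
  by rewrite (@normrZ _ Y r) (@normrZ _ Y (1 - r)) (ger0_norm r0) ger0_norm ?subr_ge0.
rewrite -(ler_pM2l s0) mulr_norm_quot ?gt_eqF //.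
have -> : s * norm_quot x h t = r * (t * norm_quot x h t) by rewrite /r mulrA mulfVK ?gt_eqF.
by rewrite mulr_norm_quot ?gt_eqF //; lra.
Qed.

Lemma norm_quot_at_right x h :
  norm_quot x h @ 0^'+ --> inf (norm_quot x h @` `]0, +oo[).
Proof.
apply: nondecreasing_at_right_cvgr => //; first exact: norm_quot_nondecreasing.
by exists (- `|h|) => _ [t + <-]; rewrite /= in_itv /= andbT; apply: norm_quot_ge.
Qed.

Section Support.
Variables (Z : set Y) (phi : Y -> R) (x : Y).
Hypotheses (sZ : lin_subspace Z) (lphi : linear_on Z phi)
  (phi_le : forall z, Z z -> phi z <= `|z|) (Zx : Z x) (phix : phi x = `|x|).

Lemma support_le_mulr_norm_quot y t : Z y -> t * phi y <= `|t *: y + x| - `|x|.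
Proof. by move=> Zy; have := phi_le (lin_subspaceZD sZ t Zy Zx); rewrite lphi // phix; lra. Qed.

Lemma support_le_norm_quot y t : Z y -> 0 < t -> phi y <= norm_quot x y t.
Proof.
by move=> Zy t0; rewrite -(ler_pM2l t0) mulr_norm_quot ?gt_eqF ?support_le_mulr_norm_quot.
Qed.

Lemma norm_quot_le_support y t : Z y -> t < 0 -> norm_quot x y t <= phi y.
Proof.
by move=> Zy t0; rewrite -(ler_nM2l t0) mulr_norm_quot ?lt_eqF ?support_le_mulr_norm_quot.
Qed.

Lemma support_eq_lim y L : Z y -> norm_quot x y @ 0^' --> L -> phi y = L.
Proof.
move=> Zy qL; apply/eqP; rewrite eq_le.
rewrite (cvg_dnbhs_to_ge_right qL) => [|t]; last exact: support_le_norm_quot.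
by rewrite (cvg_dnbhs_to_le_left qL) => // t; apply: norm_quot_le_support.
Qed.

End Support.

End NormQuotient.

Section GateauxToWU.
Variables (R : realType) (Y : normedModType R).

Section Derivative.
Variables (x : Y) (D : Y -> R).
Hypotheses (lD : linear_on setT D) (Dq : forall h, norm_quot x h @ 0^' --> D h).

Lemma gateaux_norm_derivative_bound y : `|D y| <= `|y|.
Proof.
have Dle (z : Y) : D z <= `|z|.
  by apply: (cvg_dnbhs_to_le_right (@Dq z)) => t; apply: norm_quot_le.
rewrite ler_norml Dle andbT lerNl -(linear_onN lin_subspaceT lD) //.
by rewrite -[`|y|]normrN Dle.
Qed.

Lemma gateaux_norm_derivative_at_point : D x = `|x|.
Proof.
have qx t : 0 < t -> norm_quot x x t = `|x|.
  move=> t0; rewrite /norm_quot -{2}[x]scale1r -scalerDl normrZ gtr0_norm ?addr_gt0 //.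
  by rewrite mulrDl mul1r addrK mulKf ?gt_eqF.
apply/eqP; rewrite eq_le (cvg_dnbhs_to_le_right (@Dq x)) => [|t /qx -> //].
by rewrite (cvg_dnbhs_to_ge_right (@Dq x)) => // t /qx ->.
Qed.

End Derivative.

Lemma norming_eq_gateaux_derivative (Z : set Y) (f : Y -> R) (x0 : Y) (D : Y -> R) :
  lin_subspace Z -> dual_elt Z f -> Z x0 -> `|x0| = 1 -> f x0 = dual_norm Z f ->
  (forall h, norm_quot x0 h @ 0^' --> D h) ->
  forall y, Z y -> f y = dual_norm Z f * D y.
Proof.
move=> sZ df Zx0 nx0 fx0 Dq y Zy.
have fB z : Z z -> `|f z| <= dual_norm Z f * `|z| by apply: dual_norm_bound.
move: (dual_norm_ge0 sZ df) fx0 fB; set n := dual_norm Z f => n0 fx0 fB.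
have [n_eq0|n_neq0] := eqVneq n 0.
  by apply/eqP; rewrite n_eq0 mul0r -normr_eq0 eq_le normr_ge0 -(mul0r `|y|) -n_eq0 fB.
rewrite -(support_eq_lim (phi := fun z => f z / n) sZ _ _ Zx0 _ Zy (Dq y)) /=.
- by rewrite mulrC mulfVK.
- by move=> a u v Zu Zv; rewrite df.1 //; field.
- move=> z Zz; rewrite ler_pdivrMr ?lt_def ?n_neq0 // mulrC.
  exact: le_trans (ler_norm _) (fB _ Zz).
- by rewrite fx0 nx0 mulfV.
Qed.

Lemma property_wU_of_norm_gateaux : norm_gateaux Y ->
  forall X : set Y, lin_subspace X -> property_wU X.
Proof.
move=> G X sX f df [x0 [Xx0 [nx0 fx0]]].
have x0_neq0 : x0 != 0 by rewrite -normr_eq0 nx0 oner_eq0.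
have /norm_gateaux_atP[D dD Dq] := G x0 x0_neq0.
have eqD := norming_eq_gateaux_derivative sX df Xx0 nx0 fx0 Dq.
have DB := gateaux_norm_derivative_bound dD.1 Dq.
move: fx0 eqD; set n := dual_norm X f => fx0 eqD.
have n0 : 0 <= n := dual_norm_ge0 sX df.
have nDB y : `|n * D y| <= n * `|y| by rewrite normrM ger0_norm // ler_wpM2l ?DB.
have dnD := dual_eltZ n lin_subspaceT dD.
exists (fun y => n * D y); split.
  split=> //; split=> [y Xy|]; first by rewrite eqD.
  apply/eqP; rewrite eq_le dual_norm_le //= => [|y _ y1]; last first.
    by apply: le_trans (nDB y) _; rewrite ler_piMr.
  have := dual_norm_ge lin_subspaceT dnD (I : setT x0).
  by rewrite nx0 gateaux_norm_derivative_at_point // nx0 mulr1 ger0_norm //; apply.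
move=> g [dg [gf ng]]; apply/funext => y.
by rewrite (norming_eq_gateaux_derivative lin_subspaceT dg I nx0 _ Dq) ?ng // gf.
Qed.

End GateauxToWU.

Section WUToGateaux.
Variables (R : realType) (Y : normedModType R).

(** By homogeneity for [a > 0]; for [a <= 0] the triangle inequality suffices, as [|c| <= |h|]. *)
Lemma norm_minorant_plane (x h : Y) (c : R) :
  (forall t, `|x| + t * c <= `|t *: h + x|) ->
  forall a b, a * `|x| + b * c <= `|a *: x + b *: h|.
Proof.
move=> xc a b.
have ch : `|c| <= `|h|.
  have := xc 1; have := xc (-1); have := ler_normD h x; have := ler_normD (- h) x.
  by rewrite scaleN1r scale1r normrN ler_norml; lra.
have [a0|a0] := ltP 0 a.
  have ab : a * (b / a) = b by rewrite mulrC mulfVK ?gt_eqF.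
  have -> : a *: x + b *: h = a *: ((b / a) *: h + x).
    by rewrite scalerDr scalerA ab addrC.
  rewrite normrZ gtr0_norm //; have := xc (b / a); rewrite -(ler_pM2l a0).
  by rewrite mulrDr mulrA ab.
have bc : b * c <= `|b| * `|h|.
  by apply: le_trans (ler_norm _) _; rewrite normrM ler_wpM2l.
have := lerB_normD (b *: h) (a *: x).
by rewrite [_ + a *: x]addrC (@normrZ _ Y a) (@normrZ _ Y b) (ler0_norm a0); lra.
Qed.

Hypothesis wU : forall X : set Y, closed X -> lin_subspace X -> property_wU X.

Section Plane.
Variables (x h : Y) (phi : Y -> R).
Hypotheses (dphi : dual_elt setT phi) (phix : phi x = 1).

Definition plane_proj (y : Y) : Y := y - phi y *: x.

Hypothesis h_off_line : plane_proj h != 0.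

(** The span of [x] and [h], presented as a preimage under a continuous map so as to be closed. *)
Definition plane : set Y := plane_proj @^-1` line (plane_proj h).

Definition plane_coord (y : Y) : R := line_coord (plane_proj h) (plane_proj y).

Let lphi := dphi.1.

Lemma plane_projZD a y z : plane_proj (a *: y + z) = a *: plane_proj y + plane_proj z.
Proof.
rewrite /plane_proj lphi // scalerDl scalerBr scalerA.
by rewrite opprD !addrA [_ - _ + z]addrAC.
Qed.

Lemma plane_proj_x : plane_proj x = 0.
Proof. by rewrite /plane_proj phix scale1r subrr. Qed.

Lemma plane_subspace : lin_subspace plane.
Proof.
split; first by exists 0; rewrite /plane_proj (linear_on0 lin_subspaceT lphi) !scale0r subr0.
move=> a y z [b1 e1] [b2 e2]; exists (a * b1 + b2).
by rewrite plane_projZD e1 e2 scalerA scalerDl.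
Qed.

Lemma closed_plane : closed plane.
Proof.
apply: preimage_closed; last exact: closed_line.
move=> y _; apply: cvgB; first exact: cvg_id.
by apply: continuousZl; apply/continuous_subspace_setT: y; apply: dphi.2.
Qed.

Lemma plane_x : plane x.
Proof. by exists 0; rewrite plane_proj_x scale0r. Qed.

Lemma plane_h : plane h.
Proof. by exists 1; rewrite scale1r. Qed.

Lemma plane_proj_coord y : plane y -> plane_proj y = plane_coord y *: plane_proj h.
Proof. by case=> t e; rewrite /plane_coord e line_coordZ. Qed.

Lemma plane_decomp y : plane y ->
  y = (phi y - plane_coord y * phi h) *: x + plane_coord y *: h.
Proof.
move=> /plane_proj_coord; rewrite /plane_proj => e.
have {1}-> : y = plane_coord y *: (h - phi h *: x) + phi y *: x by rewrite -e subrK.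
by rewrite scalerBr scalerA scalerBl addrAC [RHS]addrC [RHS]addrA.
Qed.

Lemma linear_on_plane_coord : linear_on plane plane_coord.
Proof.
move=> a y z Py Pz.
rewrite {1}/plane_coord plane_projZD (plane_proj_coord Py) (plane_proj_coord Pz).
by rewrite scalerA -scalerDl line_coordZ.
Qed.

Lemma plane_coord_x : plane_coord x = 0.
Proof. by rewrite /plane_coord plane_proj_x -(scale0r (plane_proj h)) line_coordZ. Qed.

Lemma plane_coord_h : plane_coord h = 1.
Proof. by have := line_coordZ 1 h_off_line; rewrite scale1r. Qed.

Lemma wU_plane_extension c :
  (forall a b, a * `|x| + b * c <= `|a *: x + b *: h|) ->
  exists G, [/\ dual_elt setT G, dual_norm setT G = 1, G x = `|x| & G h = c].
Proof.
move=> minorant.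
pose f y := (phi y - plane_coord y * phi h) * `|x| + plane_coord y * c.
have lf : linear_on plane f.
  move=> a y z Py Pz; rewrite /f lphi // linear_on_plane_coord //; ring.
have f_le y : plane y -> f y <= `|y|.
  by move=> Py; rewrite {2}(plane_decomp Py); apply: minorant.
have x_neq0 : x != 0.
  apply/eqP => x0; move: phix; rewrite x0 (linear_on0 lin_subspaceT lphi).
  by move=> /eqP; rewrite eq_sym oner_eq0.
have fx : f x = `|x| by rewrite /f plane_coord_x phix !mul0r subr0 mul1r addr0.
have [df n1 att] := support_functional_norm_attaining plane_subspace lf f_le plane_x x_neq0 fx.
have [G [[dG [Gf nG]] _]] := wU closed_plane plane_subspace df att.
exists G; split => //.
- by rewrite nG n1.
- by rewrite (Gf _ plane_x).
- by rewrite (Gf _ plane_h) /f plane_coord_h !mul1r subrr mul0r add0r.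
Qed.

End Plane.

Section SupportPoint.
Variables (x : Y) (g : Y -> R).
Hypotheses (x_neq0 : x != 0) (dg : dual_elt setT g) (g_le : forall y, g y <= `|y|)
  (gx : g x = `|x|)
  (g_unique : forall G, dual_elt setT G -> dual_norm setT G = 1 -> G x = `|x| -> G = g).

Let lg := dg.1.

Lemma norm_quot_at_right_support h : norm_quot x h @ 0^'+ --> g h.
Proof.
have := @norm_quot_at_right _ _ x h; set S := _ @` _; set L := inf S.
suff -> : L = g h by [].
have gh_lb : lbound S (g h).
  move=> _ [t + <-]; rewrite /= in_itv /= andbT.
  exact: support_le_norm_quot lin_subspaceT lg (fun y _ => g_le y) I gx _ _ (I : setT h).
have gL : g h <= L.
  by apply: lb_le_inf gh_lb; exists (norm_quot x h 1), 1; rewrite //= in_itv /= ltr01.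
have Lq t : 0 < t -> L <= norm_quot x h t.
  by move=> t0; apply: ge_inf; [exists (g h) | exists t; rewrite //= in_itv /= t0].
have minorant t : `|x| + t * L <= `|t *: h + x|.
  have [t0|t0] := ltP 0 t.
    by have := Lq t t0; rewrite -(ler_pM2l t0) mulr_norm_quot ?gt_eqF //; lra.
  have := support_le_mulr_norm_quot lin_subspaceT lg (fun y _ => g_le y) I gx t (I : setT h).
  by have := ler_wnM2l t0 gL; lra.
have nx : 0 < `|x| by rewrite normr_gt0.
pose phi y := `|x|^-1 * g y.
have dphi : dual_elt setT phi by apply: dual_eltZ.
have phix : phi x = 1 by rewrite /phi gx mulVf ?gt_eqF.
have phih : phi h * `|x| = g h by rewrite /phi mulrAC mulVf ?gt_eqF ?mul1r.
have [h_on_line|h_off_line] := eqVneq (plane_proj x phi h) 0.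
  apply/eqP; rewrite eq_le gL andbT.
  have := norm_minorant_plane minorant (- phi h) 1.
  rewrite scaleNr scale1r [_ + h]addrC; move: h_on_line; rewrite /plane_proj => ->.
  by rewrite normr0 mulNr phih mul1r; lra.
have [G [dG nG Gx Gh]] :=
  wU_plane_extension dphi phix h_off_line (norm_minorant_plane minorant).
by rewrite -Gh (g_unique dG nG Gx).
Qed.

Lemma norm_quot_cvg_support h : norm_quot x h @ 0^' --> g h.
Proof.
apply: (@cvg_at_right_left_dnbhs _ R^o); first exact: norm_quot_at_right_support.
apply/cvg_at_leftNP; rewrite oppr0.
have -> : norm_quot x h \o -%R = - norm_quot x (- h).
  by apply/funext => t /=; rewrite norm_quotN.
rewrite -[g h]opprK -(linear_onN lin_subspaceT lg) //.
exact: cvgN (@norm_quot_at_right_support (- h)).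
Qed.

End SupportPoint.

Lemma wU_support_functional (x : Y) : x != 0 -> exists g, [/\ dual_elt setT g,
  forall y, g y <= `|y|, g x = `|x| &
  forall G, dual_elt setT G -> dual_norm setT G = 1 -> G x = `|x| -> G = g].
Proof.
move=> x_neq0.
pose f y := line_coord x y * `|x|.
have lf : linear_on (line x) f.
  by move=> a _ _ [s ->] [t ->]; rewrite /f scalerA -scalerDl !line_coordZ //; ring.
have f_le y : line x y -> f y <= `|y|.
  by case=> t ->; rewrite /f line_coordZ // normrZ ler_wpM2r ?ler_norm.
have x_line : line x x by exists 1; rewrite scale1r.
have fx : f x = `|x| by have := line_coordZ 1 x_neq0; rewrite /f scale1r => ->; rewrite mul1r.
have [df n1 att] := support_functional_norm_attaining (line_subspace x) lf f_le x_line x_neq0 fx.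
have [g [[dg [gf ng]] g_uniq]] := wU (closed_line x_neq0) (line_subspace x) df att.
exists g; split => [//|y||G dG nG Gx].
- have := dual_norm_bound lin_subspaceT dg (I : setT y); rewrite ng n1 mul1r.
  exact: le_trans (ler_norm _).
- by rewrite gf.
- apply: g_uniq; split => //; split; last by rewrite nG n1.
  by move=> _ [t ->]; rewrite (linear_onZ lin_subspaceT dG.1) // Gx /f line_coordZ.
Qed.

Lemma norm_gateaux_of_wU : norm_gateaux Y.
Proof.
move=> x x_neq0; have [g [dg g_le gx g_unique]] := wU_support_functional x_neq0.
by apply/norm_gateaux_atP; exists g => // h; apply: norm_quot_cvg_support.
Qed.

End WUToGateaux.

Unset Implicit Arguments.

Theorem proposition1p12 (R : realType) (Y : completeNormedModType R) :
  norm_gateaux Y <->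
  (forall X : set Y, closed X -> lin_subspace X -> property_wU X).
Proof.
split=> [G X _|]; first exact: property_wU_of_norm_gateaux.
exact: norm_gateaux_of_wU.
Qed.
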